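(* For any two disjoint sets of vertices $V_1,V_2$, the complete oddly bipartite $4$-graph $G^{\mathrm{odd}}(V_1,V_2)$ is $\mathscr C_k^{(4)}$-hom-free for each $k\in\{1,2,3\}$. In particular, $\mathrm{ex}(n,C_L^{(4)})\ge e^{\mathrm{opt}}(n)$ for every $n$ and every $L>4$ with $L\not\equiv0\pmod4$.
   Context: $G^{\mathrm{odd}}(V_1,V_2)$ is the $4$-graph on $V_1\cup V_2$ whose edges are the $4$-subsets meeting $V_1$ in an odd number of vertices. For $\ell>4$, the tight cycle $C_\ell^{(4)}$ has vertices $v_1,\dots,v_\ell$ and edges $\{v_i,\dots,v_{i+3}\}$ (indices mod $\ell$). A homomorphism $F\to G$ maps $V(F)\to V(G)$ sending each edge of $F$ onto an edge of $G$; $G$ is $\mathscr C_k^{(4)}$-hom-free if there is no homomorphism $C_\ell^{(4)}\to G$ for any $\ell>4$ with $\ell\equiv k\pmod 4$. $\mathrm{ex}(n,F)$ is the maximum number of edges of an $n$-vertex $4$-graph with no subgraph isomorphic to $F$. $e^{\mathrm{opt}}(n)=\max_{a+b=n}\big(\binom a3b+a\binom b3\big)$. *)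

From mathcomp Require Import all_boot.
From mathcomp Require Import boolp.
Set Implicit Arguments. Unset Strict Implicit. Unset Printing Implicit Defensive.

Definition uniform4 (T : finType) (E : {set {set T}}) : bool :=
  [forall e in E, #|e| == 4].

Definition Godd (T : finType) (V1 V2 : {set T}) : {set {set T}} :=
  [set e : {set T} | [&& e \subset V1 :|: V2, #|e| == 4 & odd #|e :&: V1|]].

(* The vertices v_1..v_L of the tight cycle are
   encoded as residues mod L, i.e. f : nat -> T is L-periodic (f i is the image
   of v_{i mod L}); the edge {v_i,...,v_{i+3}} must be mapped ONTO an edge of E. *)
Definition cycle_hom (T : finType) (E : {set {set T}}) (L : nat) (f : nat -> T) : Prop :=
  (forall j, f (j + L) = f j) /\
  (forall i, i < L -> [set f (i + j) | j : 'I_4] \in E).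

Definition hom_free (T : finType) (E : {set {set T}}) (k : nat) : Prop :=
  forall l, 4 < l -> l = k %[mod 4] -> ~ (exists f : nat -> T, cycle_hom E l f).

Definition contains_cycle (T : finType) (E : {set {set T}}) (L : nat) : Prop :=
  exists f : nat -> T, cycle_hom E L f /\
    (forall i j, i < L -> j < L -> f i = f j -> i = j).

Definition ex_cycle (n L : nat) : nat :=
  \max_(E : {set {set 'I_n}} | uniform4 E && `[< ~ contains_cycle E L >]) #|E|.

Definition eopt (n : nat) : nat :=
  \max_(a < n.+1) ('C(a, 3) * (n - a) + a * 'C(n - a, 3)).

From mathcomp Require Import all_boot.
From mathcomp Require Import boolp.
Set Implicit Arguments. Unset Strict Implicit. Unset Printing Implicit Defensive.

(* Along a homomorphism f of a tight cycle into G^odd(V1, V2), let b i record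
   whether f i lies in V1.  Every edge meets V1 oddly, so every window
   b i, ..., b (i + 3) has odd sum, and comparing consecutive windows gives
   b (i + 4) = b i.  As b is also L-periodic, it is periodic with period
   L mod 4, hence with period 2 unless 4 | L; but then every window has even
   sum.  For the Turan bound, G^odd(V, ~V) with |V| = a contains all 4-sets
   meeting V in exactly 3 or exactly 1 vertices, C(a,3)(n-a) + a C(n-a,3) of
   them. *)

Definition periodic (T : Type) (f : nat -> T) (p : nat) := forall j, f (j + p) = f j.

Section Periodic.
Variables (T : Type) (f : nat -> T).

Lemma periodic_mul p m : periodic f p -> periodic f (p * m).
Proof.
by move=> fp j; elim: m => [|m IHm]; rewrite ?muln0 ?addn0 // mulnS addnA addnAC fp.
Qed.

Lemma periodic_modE p : periodic f p -> forall i, f i = f (i %% p).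
Proof. by move=> fp i; rewrite {1}(divn_eq i p) mulnC addnC periodic_mul. Qed.

Lemma periodic_mod p q : periodic f p -> periodic f q -> periodic f (q %% p).
Proof.
move=> fp fq j.
by rewrite -(periodic_mul (q %/ p) fp) -addnA [p * _]mulnC [_ + _ * p]addnC -divn_eq fq.
Qed.

Lemma periodic_sub p q : p <= q -> periodic f p -> periodic f q -> periodic f (q - p).
Proof. by move=> le_pq fp fq j; rewrite -fp -addnA subnK. Qed.

End Periodic.

Definition odd_window (b : nat -> bool) (i : nat) : bool :=
  \big[addb/false]_(j < 4) b (i + j).

Lemma odd_windowE (b : nat -> bool) i :
  odd_window b i = b i (+) b i.+1 (+) b i.+2 (+) b i.+3.
Proof.
by rewrite /odd_window !big_ord_recl big_ord0 /= /bump /= !addnS !addn0 addbF !addbA.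
Qed.

Lemma odd_windows_periodic4 (b : nat -> bool) :
  (forall i, odd_window b i) -> periodic b 4.
Proof.
move=> w i; move: (w i) (w i.+1); rewrite !odd_windowE addn4.
by case: (b i); case: (b i.+1); case: (b i.+2); case: (b i.+3); case: (b i.+4).
Qed.

Lemma periodic2_even_window (b : nat -> bool) i : periodic b 2 -> ~~ odd_window b i.
Proof.
move=> b2; rewrite odd_windowE -[i.+3]addn2 -[i.+2]addn2 !b2.
by case: (b i); case: (b i.+1).
Qed.

Lemma odd_windows_periodic_dvd4 (b : nat -> bool) l :
  (forall i, odd_window b i) -> periodic b l -> 4 %| l.
Proof.
move=> w bl; have b4 := odd_windows_periodic4 w.
have := periodic_mod b4 bl; have : l %% 4 < 4 by rewrite ltn_pmod.
rewrite /dvdn; case: (l %% 4) => [|[|[|[|r]]]] // _ blr.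
all: suff b2 : periodic b 2 by move: (w 0); rewrite (negbTE (periodic2_even_window 0 b2)).
- exact: periodic_mul 2 blr.
- exact: blr.
- exact: periodic_mul 2 (periodic_sub (leqnSn 3) blr b4).
Qed.

Lemma card_setI_imset (I T : finType) (g : I -> T) (A : {set T}) :
  injective g -> #|(g @: I) :&: A| = \sum_i (g i \in A).
Proof.
move=> g_inj; rewrite -sum1_card; under eq_bigl do rewrite inE.
by rewrite big_mkcondr big_imset //; apply: in2W.
Qed.

Lemma Godd_edge_odd (T : finType) (V1 V2 : {set T}) (g : 'I_4 -> T) :
  [set g j | j : 'I_4] \in Godd V1 V2 -> \big[addb/false]_(j < 4) (g j \in V1).
Proof.
rewrite inE => /and3P[_ card4 odd_meet].
have /imset_injP/in2T g_inj : #|g @: 'I_4| == #|'I_4| by rewrite card_ord.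
move: odd_meet; rewrite card_setI_imset // (big_morph odd oddD (erefl : odd 0 = false)).
by under eq_bigr do rewrite oddb.
Qed.

Lemma cycle_hom_edge (T : finType) (E : {set {set T}}) l f :
  0 < l -> cycle_hom E l f -> forall i, [set f (i + j) | j : 'I_4] \in E.
Proof.
move=> l_gt0 [f_per f_edge] i.
have fE := periodic_modE f_per.
have -> : [set f (i + j) | j : 'I_4] = [set f (i %% l + j) | j : 'I_4].
  by apply: eq_imset => j; rewrite fE (fE (_ + j)) modnDml.
exact: f_edge (ltn_pmod i l_gt0).
Qed.

Lemma Godd_hom_free (T : finType) (V1 V2 : {set T}) k :
  ~~ (4 %| k) -> hom_free (Godd V1 V2) k.
Proof.
move=> k_ndvd4 l l_gt4 lk [f f_hom].
have l_gt0 : 0 < l by apply: leq_trans l_gt4.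
have w i : odd_window (fun j => f j \in V1) i.
  exact: Godd_edge_odd (cycle_hom_edge l_gt0 f_hom i).
have f_per : periodic (fun j => f j \in V1) l by move=> j /=; rewrite f_hom.1.
by move: (odd_windows_periodic_dvd4 w f_per) k_ndvd4; rewrite /dvdn lk => ->.
Qed.

Lemma setU_split (T : finType) (V B C : {set T}) :
  B \subset V -> C \subset ~: V -> (B :|: C) :&: V = B /\ (B :|: C) :\: V = C.
Proof.
move=> BV; rewrite subsets_disjoint setCK => CV.
rewrite setIUl setDUl (setIidPl BV) (disjoint_setI0 CV) (setDidPl CV).
by move: BV; rewrite -setD_eq0 => /eqP->; rewrite setU0 set0U.
Qed.

Definition layer (T : finType) (V : {set T}) (i j : nat) : {set {set T}} :=
  [set e | (#|e :&: V| == i) && (#|e :\: V| == j)].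

Lemma card_layer (T : finType) (V : {set T}) i j :
  #|layer V i j| = 'C(#|V|, i) * 'C(#|~: V|, j).
Proof.
pose draws (A : {set T}) (k : nat) := [set B : {set T} | B \subset A & #|B| == k].
have union_inj : {in setX (draws V i) (draws (~: V) j) &, injective (fun p => p.1 :|: p.2)}.
  apply: (can_in_inj (g := fun e => (e :&: V, e :\: V))) => -[B C].
  by rewrite !inE => /andP[/andP[BV _] /andP[CV _]]; have [-> ->] := setU_split BV CV.
rewrite -cards_draws -cards_draws -cardsX -(card_in_imset union_inj).
apply: eq_card => e; rewrite inE; apply/idP/imsetP.
- move=> /andP[eV eD]; exists (e :&: V, e :\: V); last by rewrite setID.
  by rewrite !inE /= subsetIr eV eD setDE subsetIr.
- case=> -[B C]; rewrite !inE /= => /andP[/andP[BV /eqP cB] /andP[CV /eqP cC]] ->.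
  by have [-> ->] := setU_split BV CV; rewrite cB cC !eqxx.
Qed.

Lemma layers_sub_Godd (T : finType) (V : {set T}) :
  layer V 3 1 :|: layer V 1 3 \subset Godd V (~: V).
Proof.
apply/subsetP => e; rewrite !inE setUCr subsetT -(cardsID V e).
by case/orP => /andP[/eqP-> /eqP->].
Qed.

Lemma card_Godd_compl (T : finType) (V : {set T}) :
  'C(#|V|, 3) * #|~: V| + #|V| * 'C(#|~: V|, 3) <= #|Godd V (~: V)|.
Proof.
have disj : [disjoint layer V 3 1 & layer V 1 3].
  by apply/pred0P => e /=; rewrite !inE; case: eqP => [-> /=|//]; rewrite andbF.
rewrite -{1}(bin1 #|~: V|) -{2}(bin1 #|V|) -!card_layer.
have [_ /eqP] := leq_card_setU (layer V 3 1) (layer V 1 3); rewrite disj => <-.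
exact: subset_leq_card (layers_sub_Godd V).
Qed.

Lemma exists_set_of_card (T : finType) (a : nat) : a <= #|T| -> exists V : {set T}, #|V| = a.
Proof.
rewrite -bin_gt0 -card_draws => /card_gt0P[V]; rewrite inE => /eqP cardV.
by exists V.
Qed.

Lemma uniform4_Godd (T : finType) (V1 V2 : {set T}) : uniform4 (Godd V1 V2).
Proof. by apply/forall_inP => e; rewrite inE => /and3P[]. Qed.

Theorem proposition3p15 :
  (forall (T : finType) (V1 V2 : {set T}), [disjoint V1 & V2] ->
     forall k, 1 <= k <= 3 -> hom_free (Godd V1 V2) k)
  /\
  (forall n L, 4 < L -> L %% 4 != 0 -> eopt n <= ex_cycle n L).
Proof.
split.
  (* only membership in V1 matters *)
  move=> T V1 V2 _ k /andP[k_gt0 k_le3]; apply: Godd_hom_free.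
  by rewrite /dvdn modn_small // -lt0n.
move=> n L L_gt4 L_ndvd4; apply/bigmax_leqP => a _.
have [V cardV] : exists V : {set 'I_n}, #|V| = a.
  by apply: exists_set_of_card; rewrite card_ord -ltnS.
apply: leq_trans (leq_bigmax_cond (Godd V (~: V)) _).
  have cardCV : #|~: V| = n - a by rewrite cardsCs setCK card_ord cardV.
  by have := card_Godd_compl V; rewrite cardCV cardV.
rewrite uniform4_Godd; apply/asboolP => -[f [f_hom _]].
exact: Godd_hom_free L_ndvd4 L L_gt4 erefl (ex_intro _ f f_hom).
Qed.
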